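(* Let $\mathcal{A}\in\mathbb{R}^{d_1\times\cdots\times d_k}$ be an arbitrary order-$k$ real tensor and let $\pi_1,\pi_2\in\mathcal{P}_{[k]}$ be any two partitions (not necessarily comparable). Then \[ \left[\frac{\dim(\mathcal{A})}{\dim_{\mathcal{A}}(\pi_1,\pi_2)}\right]^{-1/2}\|\mathrm{Unfold}_{\pi_1}(\mathcal{A})\|_\sigma\le \|\mathrm{Unfold}_{\pi_2}(\mathcal{A})\|_\sigma\le \left[\frac{\dim(\mathcal{A})}{\dim_{\mathcal{A}}(\pi_2,\pi_1)}\right]^{1/2}\|\mathrm{Unfold}_{\pi_1}(\mathcal{A})\|_\sigma . \]
   Context: $\dim(\mathcal{A})=\prod_{n=1}^k d_n$. For a real tensor $\mathcal{T}\in\mathbb{R}^{e_1\times\cdots\times e_m}$, $\|\mathcal{T}\|_\sigma=\sup\{\sum t_{i_1\dots i_m}x^{(1)}_{i_1}\cdots x^{(m)}_{i_m}:\ \mathbf{x}_n\in\mathbb{R}^{e_n},\ \|\mathbf{x}_n\|_2=1\}$ (spectral norm). $\mathcal{P}_{[k]}$ is the set of partitions of $[k]=\{1,\dots,k\}$. Unfolding: for $\pi=\{B_1,\dots,B_\ell\}\in\mathcal{P}_{[k]}$, $\mathrm{Unfold}_\pi(\mathcal{A})$ is the order-$\ell$ tensor of dimensions $(\prod_{j\in B_1}d_j,\dots,\prod_{j\in B_\ell}d_j)$ whose entry at $(m_1,\dots,m_\ell)$ is $a_{i_1\dots i_k}$, where $m_j$ corresponds to $(i_r)_{r\in B_j}$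 under a fixed bijection $\prod_{r\in B_j}[d_r]\to[\prod_{r\in B_j}d_r]$. For $\pi_1,\pi_2\in\mathcal{P}_{[k]}$ define $\dim_{\mathcal{A}}(\pi_1,\pi_2)=\prod_{B\in\pi_1}\max_{B'\in\pi_2}D_{\mathcal{A}}(B,B')$, where $D_{\mathcal{A}}(B,B')=\prod_{n\in B\cap B'}d_n$ if $B\cap B'\neq\emptyset$ and $D_{\mathcal{A}}(B,B')=0$ if $B\cap B'=\emptyset$. *)

From HB Require Import structures.
From mathcomp Require Import all_boot all_order all_algebra.
From mathcomp Require Import reals.
Set Implicit Arguments. Unset Strict Implicit. Unset Printing Implicit Defensive.
Import Order.TTheory GRing.Theory Num.Theory.
Local Open Scope ring_scope.

Definition tidx (m : nat) (e : 'I_m -> nat) := {dffun forall j : 'I_m, 'I_(e j)}.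

Definition spec_norm (R : realType) (m : nat) (e : 'I_m -> nat)
    (T : tidx e -> R) : R :=
  sup ((fun s : R => exists x : forall j : 'I_m, 'I_(e j) -> R,
         (forall j, Num.sqrt (\sum_(l < e j) x j l ^+ 2) = 1) /\
         s = \sum_(i : tidx e) T i * \prod_(j < m) x j (i j))).

Definition tdim (k : nat) (d : 'I_k -> nat) : nat := (\prod_(n < k) d n)%N.

Definition DA (k : nat) (d : 'I_k -> nat) (B B' : {set 'I_k}) : nat :=
  if B :&: B' == set0 then 0%N else (\prod_(n in B :&: B') d n)%N.

Definition dimA (k : nat) (d : 'I_k -> nat) (p1 p2 : {set {set 'I_k}}) : nat :=
  (\prod_(B in p1) \max_(B' in p2) DA d B B')%N.

Definition blk (k : nat) (p : {set {set 'I_k}}) (j : 'I_#|p|) : {set 'I_k} :=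
  enum_val j.

Definition ridx (k : nat) (d : 'I_k -> nat) (B : {set 'I_k}) :=
  {dffun forall r : {r : 'I_k | r \in B}, 'I_(d (val r))}.

Definition restrict (k : nat) (d : 'I_k -> nat) (B : {set 'I_k})
    (i : tidx d) : ridx d B :=
  [ffun r : {r : 'I_k | r \in B} => i (val r)].

Definition udims (k : nat) (d : 'I_k -> nat) (p : {set {set 'I_k}})
    (j : 'I_#|p|) : nat := #|ridx d (@blk k p j)|.

(* Unfold_pi(A): entry at (m_1,...,m_l) is a_i, where m_j corresponds to
   (i_r)_{r in B_j} under the fixed bijection enum_rank.  For a partition p
   there is exactly one such i, so the sum below has exactly one term. *)
Definition unfold (R : realType) (k : nat) (d : 'I_k -> nat)
    (p : {set {set 'I_k}}) (A : tidx d -> R) : tidx (@udims k d p) -> R :=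
  fun m => \sum_(i : tidx d | [forall j : 'I_#|p|,
                 m j == enum_rank (@restrict k d (@blk k p j) i)]) A i.

Arguments blk {k} p j.
Arguments udims {k} d p j.
Arguments restrict {k} d B i.
Arguments unfold {R k d} p A _.
Arguments spec_norm {R m e} T.

From HB Require Import structures.
From mathcomp Require Import all_boot all_order all_algebra.
From mathcomp Require Import reals.
From mathcomp Require Import ring lra.
Import Order.TTheory GRing.Theory Num.Theory.
Local Open Scope ring_scope.
Set Implicit Arguments. Unset Strict Implicit. Unset Printing Implicit Defensive.

(* Fix a base index tuple [z].  A unit vector on the modes of a block [B] is the
   same as a function on full index tuples that only reads the coordinates in [B]
   and has unit square norm on the slice of tuples equal to [z] off [B]; so the
   spectral norm of [Unfold_p A] is the sup of the form [sum_i A i * prod_j f_j i]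
   over such families [f] adapted to the blocks of [p].  Given two partitions [p]
   and [q], send each block [P] of [p] to a block [star P] of [q] maximising
   [P :&: star P].  A family [g] adapted to [p] splits along the coordinates [c]
   off the union [V] of the [P :&: star P]: for fixed [c] the partial products
   [prod_(P | star P = Q) g_P] form a family adapted to [q] (up to scaling), so the
   form at [g] is at most [sup_q] times a sum over [c] of products of square
   norms, and Cauchy-Schwarz over the coordinates of [P :\: star P] bounds that
   sum by [prod_P sqrt (dim (P :\: star P)) = sqrt (dim A / dim_A (p, q))]. *)

Section Slices.
Variables (R : realType) (k : nat) (d : 'I_k -> nat).
Implicit Types (S : {set 'I_k}) (e c z : tidx d).

Definition eq_off S e z : bool := [forall n, (n \in S) || (e n == z n)].

Definition patch S (a c : tidx d) : tidx d :=
  finfun (fun n => if n \in S then a n else c n).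

Definition depends_on S (h : tidx d -> R) :=
  forall e e', (forall n, n \in S -> e n = e' n) -> h e = h e'.

Lemma patchE S a c n : patch S a c n = if n \in S then a n else c n.
Proof. by rewrite ffunE. Qed.

Lemma eq_offP S e z : reflect (forall n, n \notin S -> e n = z n) (eq_off S e z).
Proof.
apply: (iffP forallP) => H n.
  by move=> nS; move: (H n); rewrite (negbTE nS) => /eqP.
by case: (boolP (n \in S)) => //= nS; rewrite H.
Qed.

Lemma eq_off_sym S e c : eq_off S e c = eq_off S c e.
Proof. by apply/idP/idP => /eq_offP H; apply/eq_offP => n nS; rewrite H. Qed.

Lemma eq_off_congr S e e' c : (forall n, n \notin S -> e n = e' n) ->
  eq_off S e c = eq_off S e' c.
Proof.
by move=> H; apply/idP/idP => /eq_offP H'; apply/eq_offP => n nS; rewrite -H' // H.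
Qed.

Lemma eq_off0 z e : eq_off set0 e z = (e == z).
Proof. by apply/eq_offP/eqP => [H|-> //]; apply/ffunP => n; rewrite H ?inE. Qed.

Lemma eq_off_patch S e z : eq_off S (patch S e z) z.
Proof. by apply/eq_offP => n nS; rewrite patchE (negbTE nS). Qed.

Lemma eq_off_pinned S w z c :
  eq_off S c z && eq_off (~: S) c w = (c == patch S w z).
Proof.
apply/andP/eqP => [[/eq_offP H1 /eq_offP H2]| ->].
  apply/ffunP => n; rewrite patchE; case: (boolP (n \in S)) => nS; last exact: H1.
  by apply: H2; rewrite inE nS.
split; apply/eq_offP => n; rewrite patchE; first by move/negbTE ->.
by rewrite inE negbK => ->.
Qed.

Lemma sum_pinned S w z (F : tidx d -> R) :
  \sum_(c | eq_off S c z) (eq_off (~: S) c w)%:R * F c = F (patch S w z).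
Proof.
rewrite (bigID (fun c => eq_off (~: S) c w)) /=.
rewrite [X in _ + X]big1 ?addr0; last by move=> c /andP[_ /negbTE ->]; rewrite mul0r.
rewrite (eq_bigl (fun c => c == patch S w z)) ?big_pred1_eq; last first.
  by move=> c; rewrite eq_off_pinned.
by have := eq_off_pinned S w z (patch S w z); rewrite eqxx => /andP[_ ->]; rewrite mul1r.
Qed.

Definition extend S z (r : ridx d S) : tidx d :=
  finfun (fun n => (if n \in S as b return (n \in S = b -> 'I_(d n))
     then fun h => r (exist _ n h) else fun _ => z n) (erefl (n \in S))).

Arguments extend : clear implicits.

Lemma extend_in S z r n (h : n \in S) : extend S z r n = r (exist _ n h).
Proof.
rewrite ffunE.
suff E : forall (b : bool) (e : (n \in S) = b),
  (if b as b' return ((n \in S) = b' -> 'I_(d n)) then fun h => r (exist _ n h)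
   else fun _ => z n) e = r (exist _ n h) by apply: E.
case=> e; first by rewrite (bool_irrelevance e h).
by exfalso; move: e; rewrite h.
Qed.

Lemma extend_out S z r n : n \notin S -> extend S z r n = z n.
Proof.
move=> nS; rewrite ffunE.
suff E : forall (b : bool) (e : (n \in S) = b),
  (if b as b' return ((n \in S) = b' -> 'I_(d n)) then fun h => r (exist _ n h)
   else fun _ => z n) e = z n by apply: E.
by case=> e //; exfalso; move: nS; rewrite e.
Qed.

Lemma restrict_extend S z r : restrict d S (extend S z r) = r.
Proof. by apply/ffunP => -[n h]; rewrite ffunE /= (extend_in _ _ h). Qed.

Lemma extend_restrict S z c : eq_off S c z -> extend S z (restrict d S c) = c.
Proof.
move/eq_offP => H; apply/ffunP => n; case: (boolP (n \in S)) => nS.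
  by rewrite (extend_in _ _ nS) ffunE.
by rewrite extend_out // H.
Qed.

Lemma sum_ridx_slice S z (H : ridx d S -> R) :
  \sum_(r : ridx d S) H r = \sum_(c | eq_off S c z) H (restrict d S c).
Proof.
rewrite (reindex_onto (restrict d S) (extend S z)) /=; last first.
  by move=> r _; rewrite restrict_extend.
apply: eq_bigl => c; apply/eqP/idP => [<-|/extend_restrict //].
by apply/eq_offP => n nS; rewrite extend_out.
Qed.

Lemma sum_slice_setU S1 S2 z (F : tidx d -> R) :
  (forall n, n \in S1 -> n \notin S2) ->
  \sum_(e | eq_off (S1 :|: S2) e z) F e =
  \sum_(e1 | eq_off S1 e1 z) \sum_(e2 | eq_off S2 e2 z) F (patch S1 e1 e2).
Proof.
move=> dis; rewrite pair_big_dep /=.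
rewrite (reindex_onto (fun p : tidx d * tidx d => patch S1 p.1 p.2)
   (fun e => (patch S1 e z, patch S1 z e))) /=; last first.
  by move=> e _; apply/ffunP => n; rewrite !patchE; case: (n \in S1).
apply: eq_bigl => -[e1 e2] /=; rewrite xpair_eqE.
apply/andP/andP => [[/eq_offP H1 /andP[/eqP E1 /eqP E2]] | [/eq_offP H1 /eq_offP H2]].
  split; apply/eq_offP => n nS.
    by move/ffunP: E1 => /(_ n); rewrite !patchE (negbTE nS) => <-.
  case: (boolP (n \in S1)) => nS1.
    by move/ffunP: E2 => /(_ n); rewrite !patchE nS1 => <-.
  by rewrite -H1 ?patchE ?(negbTE nS1) // in_setU negb_or nS1.
split.
  apply/eq_offP => n; rewrite in_setU negb_or => /andP[n1 n2].
  by rewrite patchE (negbTE n1) H2.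
apply/andP; split; apply/eqP/ffunP => n; rewrite !patchE;
  case: (boolP (n \in S1)) => nS1 //; first by rewrite H1.
by rewrite H2 // dis.
Qed.

Lemma sum_slice_big_prod_seq (I : finType) (r : seq I) (W : I -> {set 'I_k})
    (h : I -> tidx d -> R) z :
  uniq r ->
  (forall a b, a \in r -> b \in r -> a != b -> forall n, n \in W a -> n \notin W b) ->
  (forall a, a \in r -> depends_on (W a) (h a)) ->
  \sum_(e | eq_off (\bigcup_(a <- r) W a) e z) \prod_(a <- r) h a e =
  \prod_(a <- r) \sum_(e | eq_off (W a) e z) h a e.
Proof.
elim: r => [|a r IH] /=.
  move=> _ _ _; rewrite !big_nil (eq_bigl (fun e => e == z)) ?big_pred1_eq ?big_nil //.
  by move=> e; rewrite eq_off0.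
move=> /andP[ar ur] dis dh.
have ab b : b \in r -> a != b by move=> br; apply: contraNneq ar => ->.
have in_r b : b \in r -> b \in a :: r by rewrite inE => ->; rewrite orbT.
rewrite big_cons big_cons sum_slice_setU; last first.
  move=> n na; rewrite bigcup_seq; apply/negP => /bigcupP[b br nb].
  by move: (dis a b (mem_head _ _) (in_r b br) (ab b br) n na); rewrite nb.
rewrite -IH //; last first.
  - by move=> b /in_r; apply: dh.
  - by move=> b c /in_r bi /in_r ci; apply: dis.
rewrite big_distrl /=; apply: eq_bigr => e1 _.
rewrite big_distrr /=; apply: eq_bigr => e2 _.
rewrite big_cons; congr (_ * _).
  by apply: (dh a (mem_head _ _)) => n na; rewrite patchE na.
apply: eq_big_seq => b br; apply: (dh b (in_r b br)) => n nb.
rewrite patchE; have := dis b a (in_r b br) (mem_head _ _).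
by rewrite eq_sym (ab b br) => /(_ isT n nb) /negbTE ->.
Qed.

Lemma sum_slice_big_prod (I : finType) (P : pred I) (W : I -> {set 'I_k})
    (h : I -> tidx d -> R) z :
  (forall a b, P a -> P b -> a != b -> forall n, n \in W a -> n \notin W b) ->
  (forall a, P a -> depends_on (W a) (h a)) ->
  \sum_(e | eq_off (\bigcup_(a | P a) W a) e z) \prod_(a | P a) h a e =
  \prod_(a | P a) \sum_(e | eq_off (W a) e z) h a e.
Proof.
move=> dis dh; set r := [seq a <- index_enum I | P a].
have big_r (F : I -> R) : \prod_(a | P a) F a = \prod_(a <- r) F a by rewrite big_filter.
have -> : \bigcup_(a | P a) W a = \bigcup_(a <- r) W a by rewrite big_filter.
rewrite (eq_bigr _ (fun e _ => big_r (h^~ e))) big_r; apply: sum_slice_big_prod_seq.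
- by rewrite filter_uniq // index_enum_uniq.
- by move=> a b; rewrite !mem_filter => /andP[Pa _] /andP[Pb _]; apply: dis.
- by move=> a; rewrite mem_filter => /andP[Pa _]; apply: dh.
Qed.

Lemma sum_slice_set1 n z : \sum_(e | eq_off [set n] e z) (1 : R) = (d n)%:R.
Proof.
pose hh x := finfun (@dfwith _ (fun m => 'I_(d m)) (fun m => z m) n x) : tidx d.
rewrite (reindex_onto hh (fun e => e n)) /=; last first.
  move=> e /eq_offP He; apply/ffunP => m; rewrite ffunE.
  by case: dfwithP => // m' nm'; rewrite He // inE eq_sym.
rewrite (eq_bigl predT) ?sumr_const ?card_ord // => x.
rewrite /hh ffunE dfwith_in eqxx andbT.
by apply/eq_offP => m; rewrite inE => mn; rewrite ffunE dfwith_out // eq_sym.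
Qed.

Lemma sum_slice1 S z : \sum_(e | eq_off S e z) (1 : R) = (\prod_(n in S) d n)%:R.
Proof.
have S_cup : S = \bigcup_(n in S) [set n].
  apply/setP => n; apply/idP/bigcupP => [nS|[m mS]]; first by exists n; rewrite ?inE.
  by rewrite inE => /eqP ->.
rewrite natr_prod -[in RHS](eq_bigr _ (fun n _ => sum_slice_set1 n z)).
rewrite -sum_slice_big_prod.
- by rewrite -S_cup; apply: eq_bigr => e _; rewrite big1_eq.
- by move=> a b _ _ ab n; rewrite !inE => /eqP ->.
- by move=> a _ e e' _.
Qed.

End Slices.

Arguments extend {k d} S z r.

Section Blocks.
Variables (k : nat) (p : {set {set 'I_k}}).
Hypothesis pP : partition p [set: 'I_k].

Lemma blk_cover n : exists j, n \in blk p j.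
Proof.
case/and3P: pP => /eqP cov _ _.
have : n \in cover p by rewrite cov inE.
case/bigcupP => B Bp nB; exists (enum_rank_in Bp B).
by rewrite /blk enum_rankK_in.
Qed.

Lemma blk_disj j j' n : j != j' -> n \in blk p j -> n \notin blk p j'.
Proof.
case/and3P: pP => _ /trivIsetP tr _ jj' nj.
have ne : blk p j != blk p j' by apply: contra jj' => /eqP /enum_val_inj ->.
by rewrite (disjointFr (tr _ _ (enum_valP j) (enum_valP j') ne) nj).
Qed.

Lemma blk_nonempty j : exists n, n \in blk p j.
Proof.
case/and3P: pP => _ _ n0.
have : blk p j != set0 by apply: contraNneq n0 => <-; apply: enum_valP.
by case/set0Pn => n; exists n.
Qed.

Lemma eq_off_compl_blk (R : realType) (d : 'I_k -> nat) S (i c : tidx d) :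
  (eq_off (~: S) i c)%:R = \prod_j (eq_off (~: (S :&: blk p j)) i c)%:R :> R.
Proof.
case: (boolP (eq_off (~: S) i c)) => H.
  rewrite big1 // => j _; suff -> : eq_off (~: (S :&: blk p j)) i c by [].
  apply/eq_offP => n; rewrite inE negbK inE => /andP[nS _]; move/eq_offP: H; apply.
  by rewrite inE negbK.
have [n nS ne] : exists2 n, n \in S & i n != c n.
  move: H; rewrite /eq_off negb_forall => /existsP[n].
  by rewrite negb_or inE negbK => /andP[nS ne]; exists n.
have [j nj] := blk_cover n.
rewrite (bigD1 j) //=; suff -> : eq_off (~: (S :&: blk p j)) i c = false by rewrite mul0r.
apply/negP => /eq_offP H'; move: ne; rewrite H' ?eqxx // inE negbK inE nS; exact: nj.
Qed.

End Blocks.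

Section Blockform.
Variables (R : realType) (k : nat) (d : 'I_k -> nat) (A : tidx d -> R) (z : tidx d).
Implicit Types (S : {set 'I_k}) (p : {set {set 'I_k}}).

Definition sqnorm_on S (g : tidx d -> R) := \sum_(c | eq_off S c z) g c ^+ 2.

Definition blockform p (f : 'I_#|p| -> tidx d -> R) := \sum_i A i * \prod_j f j i.

Definition unit_family p (f : 'I_#|p| -> tidx d -> R) :=
  (forall j, depends_on (blk p j) (f j)) /\ (forall j, sqnorm_on (blk p j) (f j) = 1).

Definition blockform_values p : R -> Prop :=
  fun s => exists2 f, @unit_family p f & s = blockform f.

Lemma unfold_formE p (x : forall j : 'I_#|p|, 'I_(udims d p j) -> R) :
  \sum_(m : tidx (udims d p)) unfold p A m * \prod_j x j (m j) =
  \sum_i A i * \prod_j x j (enum_rank (restrict d (blk p j) i)).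
Proof.
rewrite /unfold; under eq_bigr do rewrite big_distrl big_mkcond /=.
rewrite exchange_big /=; apply: eq_bigr => i _.
pose mi := [ffun j => enum_rank (restrict d (blk p j) i)] : tidx (udims d p).
rewrite -big_mkcond /= (eq_bigl (fun m => m == mi)) ?big_pred1_eq.
  by congr (_ * _); apply: eq_bigr => j _; rewrite ffunE.
move=> m; apply/forallP/eqP => [H|-> j]; last by rewrite ffunE.
by apply/ffunP => j; rewrite ffunE; apply/eqP.
Qed.

Lemma sum_ord_slice S (G : 'I_#|ridx d S| -> R) :
  \sum_(l < #|ridx d S|) G l = \sum_(c | eq_off S c z) G (enum_rank (restrict d S c)).
Proof.
rewrite -(sum_ridx_slice z (fun r => G (enum_rank r))).
rewrite (reindex (@enum_rank (ridx d S))) //.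
by exists enum_val => l _; [exact: enum_rankK | exact: enum_valK].
Qed.

Lemma spec_norm_unfoldE p : spec_norm (unfold p A) = sup (blockform_values p).
Proof.
rewrite /spec_norm; congr sup; apply: boolp.funext => s; apply: boolp.propext; split.
  move=> [x [x_unit ->]].
  exists (fun j c => x j (enum_rank (restrict d (blk p j) c))); last first.
    by rewrite unfold_formE.
  split=> j.
    move=> e e' H; congr (x j (enum_rank _)); apply/ffunP => -[n h].
    by rewrite !ffunE /=; apply: H.
  rewrite /sqnorm_on -(sum_ord_slice (fun l => x j l ^+ 2)).
  have := x_unit j => /(congr1 (fun t => t ^+ 2)); rewrite sqr_sqrtr ?expr1n //.
  by apply: sumr_ge0 => l _; apply: sqr_ge0.
move=> [f [f_dep f_norm] ->].
exists (fun j l => f j (extend (blk p j) z (enum_val l))); split.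
  move=> j; rewrite (sum_ord_slice (fun l => f j (extend (blk p j) z (enum_val l)) ^+ 2)).
  under eq_bigr => c Hc do rewrite enum_rankK extend_restrict //.
  by rewrite -/(sqnorm_on _ _) f_norm sqrtr1.
rewrite (unfold_formE (fun j l => f j (extend (blk p j) z (enum_val l)))).
apply: eq_bigr => i _; congr (_ * _).
apply: eq_bigr => j _; rewrite enum_rankK; apply: f_dep => n h.
by rewrite (extend_in _ _ h) ffunE.
Qed.

Lemma sqr_le_sqnorm_on S g c : eq_off S c z -> g c ^+ 2 <= sqnorm_on S g.
Proof.
move=> Sc; rewrite /sqnorm_on (bigD1 c) //= lerDl.
by apply: sumr_ge0 => e _; apply: sqr_ge0.
Qed.

Lemma sqnorm_on_ge0 S g : 0 <= sqnorm_on S g.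
Proof. by apply: sumr_ge0 => c _; apply: sqr_ge0. Qed.

Lemma sqnorm_on_eq0 S g i : depends_on S g -> sqnorm_on S g = 0 -> g i = 0.
Proof.
move=> g_dep g0; have -> : g i = g (patch S i z) by apply: g_dep => n nS; rewrite patchE nS.
have := sqr_le_sqnorm_on g (eq_off_patch S i z); rewrite g0 => h.
by apply/eqP; rewrite -sqrf_eq0 eq_le h sqr_ge0.
Qed.

Lemma unit_normr_le1 S g i : depends_on S g -> sqnorm_on S g = 1 -> `|g i| <= 1.
Proof.
move=> g_dep g1; have E : g i = g (patch S i z).
  by apply: g_dep => n nS; rewrite patchE nS.
have := sqr_le_sqnorm_on g (eq_off_patch S i z); rewrite g1 -E.
by case: (ger0P (g i)) => _ H; nra.
Qed.

Lemma blockform_values_has_ubound p : classical_sets.has_ubound (blockform_values p).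
Proof.
exists (\sum_i `|A i|) => _ [f [f_dep f_norm] ->]; apply: ler_sum => i _.
apply: le_trans (ler_norm _) _; rewrite normrM normr_prod.
apply: ler_piMr => //; apply: prodr_ile1 => j _.
by rewrite normr_ge0 /=; apply: unit_normr_le1 (f_dep j) (f_norm j).
Qed.

Definition dirac_on S (c : tidx d) : R := (eq_off (~: S) c z)%:R.

Lemma dirac_on_unit S : depends_on S (dirac_on S) /\ sqnorm_on S (dirac_on S) = 1.
Proof.
split.
  move=> e e' H; rewrite /dirac_on; congr (_%:R); congr (nat_of_bool _).
  by apply: eq_off_congr => n; rewrite inE negbK => /H.
rewrite /sqnorm_on -[RHS](sum_pinned S z z (fun=> 1)).
apply: eq_bigr => c _; rewrite mulr1 /dirac_on.
by case: (eq_off _ _ _); rewrite ?expr1n ?expr0n.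
Qed.

Lemma blockform_values_dirac p :
  blockform_values p (blockform (fun j => dirac_on (blk p j))).
Proof.
by exists (fun j => dirac_on (blk p j)) => //; split=> j; case: (dirac_on_unit (blk p j)).
Qed.

Lemma sup_blockform_values_ge0 p (j0 : 'I_#|p|) : 0 <= sup (blockform_values p).
Proof.
pose f j := dirac_on (blk p j).
pose f' j := if j == j0 then (fun c => - f j c) else f j.
have ub := ub_le_sup (blockform_values_has_ubound p).
have le_f := ub _ (blockform_values_dirac p).
have le_f' : blockform f' <= sup (blockform_values p).
  apply: ub; exists f' => //; split=> j; rewrite /f'; case: eqP => _;
    case: (dirac_on_unit (blk p j)) => // f_dep f_norm.
  - by move=> e e' He; congr (- _); apply: f_dep.
  - by rewrite /sqnorm_on; under eq_bigr do rewrite sqrrN.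
have : blockform f' = - blockform f.
  rewrite /blockform -sumrN; apply: eq_bigr => i _.
  rewrite (bigD1 j0) //= [in RHS](bigD1 j0) //= /f' eqxx mulNr mulrN.
  by congr (- (_ * (_ * _))); apply: eq_bigr => j /negbTE ->.
lra.
Qed.

Lemma blockform_le_sup p (w : 'I_#|p| -> tidx d -> R) :
  (forall j, depends_on (blk p j) (w j)) ->
  blockform w <= sup (blockform_values p) * \prod_j Num.sqrt (sqnorm_on (blk p j) (w j)).
Proof.
move=> w_dep.
have [/existsP[j /eqP wj0] | /existsPn w_ne0] :=
  boolP [exists j, sqnorm_on (blk p j) (w j) == 0].
  rewrite (bigD1 j) //= wj0 sqrtr0 mul0r mulr0 /blockform big1 // => i _.
  by rewrite (bigD1 j) //= (sqnorm_on_eq0 i (w_dep j) wj0) mul0r mulr0.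
set N := \prod_j _.
have sqrt_gt0 j : 0 < Num.sqrt (sqnorm_on (blk p j) (w j)).
  by rewrite sqrtr_gt0 lt_def w_ne0 sqnorm_on_ge0.
have N_gt0 : 0 < N by apply: prodr_gt0 => j _.
pose f j c := w j c / Num.sqrt (sqnorm_on (blk p j) (w j)).
have f_val : blockform_values p (blockform f).
  exists f => //; split=> j.
    by move=> e e' He; rewrite /f (w_dep j e e' He).
  rewrite /sqnorm_on /f; under eq_bigr do rewrite expr_div_n.
  by rewrite -mulr_suml -/(sqnorm_on _ _) sqr_sqrtr ?sqnorm_on_ge0 // divff.
have := ub_le_sup (blockform_values_has_ubound p) f_val.
have -> : blockform f = blockform w / N.
  rewrite /blockform mulr_suml; apply: eq_bigr => i _; rewrite -mulrA; congr (_ * _).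
  by rewrite /f big_split /= prodfV.
by rewrite ler_pdivrMr.
Qed.

End Blockform.

Lemma sqrt_prod (R : rcfType) (I : Type) (r : seq I) (P : pred I) (F : I -> R) :
  (forall i, P i -> 0 <= F i) ->
  Num.sqrt (\prod_(i <- r | P i) F i) = \prod_(i <- r | P i) Num.sqrt (F i).
Proof.
move=> F_ge0; elim: r => [|a r IH]; rewrite ?big_nil ?sqrtr1 // !big_cons.
by case: ifP => Pa //; rewrite sqrtrM ?IH //; apply: F_ge0.
Qed.

Lemma sum_sqrt_le (R : rcfType) (I : finType) (P : pred I) (x : I -> R) :
  (forall i, P i -> 0 <= x i) -> \sum_(i | P i) x i = 1 ->
  \sum_(i | P i) Num.sqrt (x i) <= Num.sqrt (\sum_(i | P i) 1).
Proof.
move=> x_ge0 sum_x1; set N := \sum_(i | P i) 1.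
have N_ge1 : 1 <= N.
  case: (pickP P) => [i Pi|P0]; last first.
    by move: sum_x1; rewrite big_pred0 // => /eqP; rewrite eq_sym oner_eq0.
  by rewrite /N (bigD1 i) //= lerDl sumr_ge0.
set t := Num.sqrt N; have t_gt0 : 0 < t by rewrite sqrtr_gt0; lra.
(* AM-GM with weights tuned so that the bound is attained when all [x i] are [1/N] *)
have amgm y : 0 <= y -> Num.sqrt y <= (y * t + t^-1) / 2.
  move=> y_ge0; set s := Num.sqrt y.
  have E : y * t + t^-1 - 2 * s = t^-1 * (s * t - 1) ^+ 2.
    by rewrite -[y](sqr_sqrtr y_ge0) -/s; field; exact: lt0r_neq0.
  have : 0 <= t^-1 * (s * t - 1) ^+ 2 by rewrite mulr_ge0 ?sqr_ge0 ?invr_ge0 ?ltW.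
  by rewrite -E; lra.
apply: le_trans (ler_sum _ (fun i Pi => amgm _ (x_ge0 i Pi))) _.
rewrite -mulr_suml big_split /= -mulr_suml sum_x1 mul1r.
have -> : \sum_(i | P i) t^-1 = N * t^-1.
  by rewrite /N mulr_suml; apply: eq_bigr => i _; rewrite mul1r.
have -> : N = t ^+ 2 by rewrite sqr_sqrtr //; lra.
by rewrite le_eqVlt; apply/orP; left; apply/eqP; field; exact: lt0r_neq0.
Qed.

Section Coarsening.
Variables (R : realType) (k : nat) (d : 'I_k -> nat) (A : tidx d -> R) (z : tidx d).
Variables (p q : {set {set 'I_k}}) (star : 'I_#|p| -> 'I_#|q|).
Hypotheses (pP : partition p [set: 'I_k]) (qP : partition q [set: 'I_k]).
Variable g : 'I_#|p| -> tidx d -> R.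
Hypothesis g_unit : unit_family z g.

Let g_dep b : depends_on (blk p b) (g b). Proof. by case: g_unit. Qed.

Let W b := blk p b :&: blk q (star b).
Let X b := blk p b :\: blk q (star b).
Let V := \bigcup_b W b.
Let U := ~: V.

(* With the coordinates of [U] pinned to those of [c], the [g b] sent to the same
   block [j] of [q] multiply to a function of the coordinates of that block. *)
Let w (c : tidx d) (j : 'I_#|q|) (i : tidx d) : R :=
  (eq_off (~: (U :&: blk q j)) i c)%:R * \prod_(b | star b == j) g b (patch V i c).

Let pinned_sqnorm b c := \sum_(e | eq_off (W b) e z) g b (patch V e c) ^+ 2.

Let pinned_sqnorm_ge0 b c : 0 <= pinned_sqnorm b c.
Proof. by apply: sumr_ge0 => e _; apply: sqr_ge0. Qed.

Let mem_V b n : n \in blk p b -> (n \in V) = (n \in blk q (star b)).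
Proof.
move=> nb; apply/bigcupP/idP => [[b' _]|nP]; last by exists b; rewrite // inE nb nP.
rewrite inE => /andP[nb' nP']; case: (eqVneq b b') => [-> //|bb'].
by move: (blk_disj pP bb' nb); rewrite nb'.
Qed.

Let W_disj a b n : a != b -> n \in W a -> n \notin W b.
Proof.
move=> ab; rewrite !inE => /andP[na _]; apply/negP => /andP[nb _].
by move: (blk_disj pP ab na); rewrite nb.
Qed.

Let blockform_sum_pins : blockform A g = \sum_(c | eq_off U c z) blockform A (w c).
Proof.
rewrite /blockform exchange_big /=; apply: eq_bigr => i _.
rewrite -mulr_sumr; congr (_ * _).
transitivity (\sum_(c | eq_off U c z) (eq_off (~: U) c i)%:R * \prod_b g b (patch V i c)).
  rewrite sum_pinned; apply: eq_bigr => b _; congr (g b _); apply/ffunP => n.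
  by rewrite !patchE inE; case: (n \in V).
apply: eq_bigr => c _.
rewrite eq_off_sym (eq_off_compl_blk qP) (partition_big star xpredT) //= -big_split /=.
by apply: eq_bigr.
Qed.

Let w_dep c j : depends_on (blk q j) (w c j).
Proof.
move=> e e' ee'; rewrite /w; congr (_ * _).
  rewrite (eq_off_congr _ (e' := e')) // => n; rewrite inE negbK inE => /andP[_ nP].
  exact: ee'.
apply: eq_bigr => b /eqP sb; apply: g_dep => n nb; rewrite !patchE; case: ifP => // nV.
by apply: ee'; rewrite -sb -(mem_V nb).
Qed.

Let V_blkE j : V :&: blk q j = \bigcup_(b | star b == j) W b.
Proof.
apply/setP => n; rewrite !inE; apply/andP/bigcupP => [[nV nP]|[b /eqP sb]].
  move/bigcupP: nV => [b _]; rewrite inE => /andP[nb nPb].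
  exists b; last by rewrite inE nb nPb.
  case: (eqVneq (star b) j) => // ne.
  by move: (blk_disj qP ne nPb); rewrite nP.
rewrite inE => /andP[nb nPb]; split; last by rewrite -sb.
by apply/bigcupP; exists b => //; rewrite inE nb nPb.
Qed.

Let sqnorm_w c j :
  sqnorm_on z (blk q j) (w c j) = \prod_(b | star b == j) pinned_sqnorm b c.
Proof.
set T := U :&: blk q j.
have -> : blk q j = T :|: (V :&: blk q j).
  by apply/setP => n; rewrite !inE; case: (n \in V); case: (n \in blk q j).
rewrite /sqnorm_on sum_slice_setU; last by move=> n; rewrite !inE => /andP[/negbTE ->].
transitivity (\sum_(e1 | eq_off T e1 z) (eq_off (~: T) e1 c)%:R *
   \sum_(e2 | eq_off (V :&: blk q j) e2 z)
     (\prod_(b | star b == j) g b (patch V (patch T e1 e2) c)) ^+ 2).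
  apply: eq_bigr => e1 _; rewrite mulr_sumr; apply: eq_bigr => e2 _.
  rewrite /w exprMn; congr (_ * _).
  rewrite (eq_off_congr _ (e' := e1)); last first.
    by move=> n; rewrite inE negbK => nT; rewrite patchE nT.
  by case: (eq_off _ _ _); rewrite /= ?expr1n ?expr0n.
rewrite sum_pinned V_blkE.
rewrite (eq_bigr (fun e => \prod_(b | star b == j) g b (patch V e c) ^+ 2)); last first.
  move=> e _; rewrite prodrXl; congr (_ ^+ 2); apply: eq_bigr => b _.
  by congr (g b _); apply/ffunP => n; rewrite !patchE !inE; case: (n \in V).
rewrite sum_slice_big_prod //; first by move=> a b _ _ ab n; apply: W_disj.
move=> b _ e e' ee'; congr (_ ^+ 2); apply: g_dep => n nb; rewrite !patchE.
by case: ifP => // nV; apply: ee'; rewrite inE nb -(mem_V nb) nV.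
Qed.

Let sqrt_sqnorm_w c : \prod_j Num.sqrt (sqnorm_on z (blk q j) (w c j)) =
  \prod_b Num.sqrt (pinned_sqnorm b c).
Proof.
rewrite [RHS](partition_big star xpredT) //=; apply: eq_bigr => j _.
by rewrite sqnorm_w sqrt_prod // => b _; apply: pinned_sqnorm_ge0.
Qed.

Let sum_prod_sqrt_pinned_sqnorm :
  \sum_(c | eq_off U c z) \prod_b Num.sqrt (pinned_sqnorm b c) =
  \prod_b \sum_(c | eq_off (X b) c z) Num.sqrt (pinned_sqnorm b c).
Proof.
have -> : U = \bigcup_(b | xpredT b) X b.
  apply/setP => n; rewrite inE; apply/idP/bigcupP => [nV|[b _]].
    have [b nb] := blk_cover pP n; exists b => //.
    by rewrite inE nb andbT -(mem_V nb).
  by rewrite inE => /andP[nP nb]; rewrite (mem_V nb).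
rewrite sum_slice_big_prod //.
- move=> a b _ _ ab n; rewrite !inE => /andP[_ na]; apply/negP => /andP[_ nb].
  by move: (blk_disj pP ab na); rewrite nb.
- move=> b _ c c' cc'; congr (Num.sqrt _); apply: eq_bigr => e _.
  congr (_ ^+ 2); apply: g_dep => n nb; rewrite !patchE; case: ifP => // nV.
  by apply: cc'; rewrite inE nb andbT -(mem_V nb) nV.
Qed.

Let sum_pinned_sqnorm b : \sum_(c | eq_off (X b) c z) pinned_sqnorm b c = 1.
Proof.
rewrite /pinned_sqnorm exchange_big /=.
transitivity (\sum_(e | eq_off (W b) e z)
  \sum_(c | eq_off (X b) c z) g b (patch (W b) e c) ^+ 2).
  apply: eq_bigr => e _; apply: eq_bigr => c _; congr (_ ^+ 2).
  by apply: g_dep => n nb; rewrite !patchE inE nb /= (mem_V nb).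
rewrite -(sum_slice_setU z (fun x => g b x ^+ 2)); last first.
  by move=> n; rewrite !inE => /andP[_ ->].
rewrite (eq_bigl (fun e => eq_off (blk p b) e z)); last by move=> e; rewrite setID.
by case: g_unit => _; apply.
Qed.

Lemma blockform_le_coarsen : 0 <= sup (blockform_values A z q) ->
  blockform A g <= sup (blockform_values A z q) *
    \prod_b Num.sqrt ((\prod_(n in blk p b :\: blk q (star b)) d n)%:R).
Proof.
move=> sup_ge0; rewrite blockform_sum_pins.
apply: le_trans (ler_sum _ (fun c _ => blockform_le_sup A z (w_dep c))) _.
rewrite -mulr_sumr (eq_bigr _ (fun c _ => sqrt_sqnorm_w c)).
rewrite sum_prod_sqrt_pinned_sqnorm; apply: ler_wpM2l => //.
apply: ler_prod => b _; apply/andP; split.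
  by apply: sumr_ge0 => c _; apply: sqrtr_ge0.
rewrite -(sum_slice1 R _ z).
by apply: sum_sqrt_le => [c _|]; [apply: pinned_sqnorm_ge0 | apply: sum_pinned_sqnorm].
Qed.

End Coarsening.

Section Dimension.
Variables (k : nat) (d : 'I_k -> nat) (p q : {set {set 'I_k}}).
Hypotheses (pP : partition p [set: 'I_k]) (qP : partition q [set: 'I_k]).

Lemma tdim_split (star : 'I_#|p| -> 'I_#|q|) :
  tdim d = (\prod_b \prod_(n in blk p b :&: blk q (star b)) d n *
            \prod_b \prod_(n in blk p b :\: blk q (star b)) d n)%N.
Proof.
rewrite -big_split /= /tdim.
case/and3P: pP => /eqP cov triv _.
rewrite (eq_bigl (fun n => n \in cover p)); last by move=> n; rewrite cov inE.
rewrite big_trivIset // big_enum_val; apply: eq_bigr => b _.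
rewrite (bigID (fun n => n \in blk q (star b))) /=; congr (_ * _)%N.
  by apply: eq_bigl => n; rewrite inE.
by apply: eq_bigl => n; rewrite inE andbC.
Qed.

Hypothesis d_gt0 : forall n, (0 < d n)%N.
Variable j0 : 'I_#|q|.

Definition best_blk b := [arg max_(j > j0) DA d (blk p b) (blk q j)].

Lemma bigmax_DA_best b :
  (\max_(B' in q) DA d (blk p b) B')%N = DA d (blk p b) (blk q (best_blk b)).
Proof.
rewrite big_enum_val.
exact: (bigop.bigmax_eq_arg j0 (P := xpredT) (F := fun j => DA d (blk p b) (blk q j))).
Qed.

Lemma DA_best_gt0 b : (0 < DA d (blk p b) (blk q (best_blk b)))%N.
Proof.
have [n nb] := blk_nonempty pP b; have [j nj] := blk_cover qP n.
apply: leq_trans (_ : 0 < DA d (blk p b) (blk q j))%N _.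
  rewrite /DA; case: ifP => [/eqP/setP/(_ n)|_]; last exact: prodn_gt0.
  by rewrite !inE nb nj.
rewrite -bigmax_DA_best big_enum_val.
exact: (bigop.leq_bigmax (F := fun j => DA d (blk p b) (blk q j))).
Qed.

Lemma dimA_best : dimA d p q = (\prod_b \prod_(n in blk p b :&: blk q (best_blk b)) d n)%N.
Proof.
rewrite /dimA big_enum_val; apply: eq_bigr => b _.
by move: (DA_best_gt0 b); rewrite bigmax_DA_best /DA; case: ifP.
Qed.

Lemma dim_ratioE (R : realType) : (tdim d)%:R / (dimA d p q)%:R =
  (\prod_b \prod_(n in blk p b :\: blk q (best_blk b)) d n)%:R :> R.
Proof.
rewrite (tdim_split best_blk) dimA_best natrM mulrC mulKf // pnatr_eq0 -lt0n.
by apply: prodn_gt0 => b; apply: prodn_gt0.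
Qed.

End Dimension.

Section SpectralNorm.
Variables (R : realType) (k : nat) (d : 'I_k -> nat) (A : tidx d -> R).
Variables (p q : {set {set 'I_k}}).
Hypotheses (d_gt0 : forall n, (0 < d n)%N) (k_gt0 : (0 < k)%N).
Hypotheses (pP : partition p [set: 'I_k]) (qP : partition q [set: 'I_k]).

Let j0 : 'I_#|q| := xchoose (blk_cover qP (Ordinal k_gt0)).

Lemma dim_ratio_gt0 : 0 < (tdim d)%:R / (dimA d p q)%:R :> R.
Proof.
by rewrite (dim_ratioE pP qP d_gt0 j0) ltr0n; apply: prodn_gt0 => b; apply: prodn_gt0.
Qed.

Lemma spec_norm_unfold_le : spec_norm (unfold p A) <=
  Num.sqrt ((tdim d)%:R / (dimA d p q)%:R) * spec_norm (unfold q A).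
Proof.
pose z : tidx d := [ffun n => Ordinal (d_gt0 n)].
rewrite !(spec_norm_unfoldE A z) (dim_ratioE pP qP d_gt0 j0) natr_prod sqrt_prod //.
apply: ge_sup; first by eexists; apply: blockform_values_dirac.
move=> _ [g g_unit ->]; rewrite mulrC.
exact: (blockform_le_coarsen (best_blk d j0) pP qP g_unit (sup_blockform_values_ge0 A z j0)).
Qed.

End SpectralNorm.

Lemma partition_ord0 (p : {set {set 'I_0}}) : partition p [set: 'I_0] -> p = set0.
Proof.
move=> /and3P[_ _ n0]; apply/setP => B; rewrite inE; apply/negbTE.
by have -> : B = set0 by apply/setP => -[].
Qed.

Unset Implicit Arguments.

Theorem theorem4p8 (R : realType) (k : nat) (d : 'I_k -> nat)
    (A : tidx d -> R) (p1 p2 : {set {set 'I_k}}) :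
  (forall n, 0 < d n)%N ->
  partition p1 [set: 'I_k] -> partition p2 [set: 'I_k] ->
  (Num.sqrt ((tdim d)%:R / (dimA d p1 p2)%:R))^-1 * spec_norm (unfold p1 A)
    <= spec_norm (unfold p2 A) /\
  spec_norm (unfold p2 A)
    <= Num.sqrt ((tdim d)%:R / (dimA d p2 p1)%:R) * spec_norm (unfold p1 A).
Proof.
move=> d_gt0 p1P p2P; have [k0|k_gt0] := posnP k.
  subst k; rewrite (partition_ord0 p1P) (partition_ord0 p2P).
  by rewrite /tdim /dimA big_ord0 big_set0 divr1 sqrtr1 invr1 !mul1r.
split; last exact: spec_norm_unfold_le.
rewrite ler_pdivrMl ?sqrtr_gt0 ?dim_ratio_gt0 //.
exact: spec_norm_unfold_le.
Qed.
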